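(* Let $a,c,d\in\mathbb{H}$ and $b\in\mathrm{Im}\,\mathbb{H}$, and let $$X=\begin{bmatrix}0&a&0\\-\bar a&b&0\\0&0&0\end{bmatrix},\qquad Y=\begin{bmatrix}0&0&c\\0&0&d\\-\bar c&-\bar d&0\end{bmatrix}\in\mathfrak{sp}(3),$$ and assume $X$ and $Y$ are linearly independent over $\mathbb{R}$. Then $[X,Y]=0$ if and only if $a=d=0$.
   Context: $\mathbb{H}$ denotes the quaternions, $\mathrm{Im}\,\mathbb{H}$ the purely imaginary quaternions, and $[X,Y]=XY-YX$. *)

From mathcomp Require Import all_boot all_order all_algebra.
From mathcomp Require Import reals.
Set Implicit Arguments. Unset Strict Implicit. Unset Printing Implicit Defensive.
Import GRing.Theory Num.Theory.
Local Open Scope ring_scope.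

(* Quaternions over the reals R : realType, q = q0 + q1 i + q2 j + q3 k. *)
Record quat (R : realType) := Quat { q0 : R; q1 : R; q2 : R; q3 : R }.
Arguments Quat {R}.

Section Quat.
Variable R : realType.
Definition qzero : quat R := Quat 0 0 0 0.
Definition qadd (p q : quat R) : quat R :=
  Quat (q0 p + q0 q) (q1 p + q1 q) (q2 p + q2 q) (q3 p + q3 q).
Definition qopp (p : quat R) : quat R := Quat (- q0 p) (- q1 p) (- q2 p) (- q3 p).
Definition qscale (r : R) (p : quat R) : quat R :=
  Quat (r * q0 p) (r * q1 p) (r * q2 p) (r * q3 p).
Definition qmul (p q : quat R) : quat R :=
  Quat (q0 p * q0 q - q1 p * q1 q - q2 p * q2 q - q3 p * q3 q)
       (q0 p * q1 q + q1 p * q0 q + q2 p * q3 q - q3 p * q2 q)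
       (q0 p * q2 q - q1 p * q3 q + q2 p * q0 q + q3 p * q1 q)
       (q0 p * q3 q + q1 p * q2 q - q2 p * q1 q + q3 p * q0 q).
Definition qconj (p : quat R) : quat R := Quat (q0 p) (- q1 p) (- q2 p) (- q3 p).
Definition is_imag (p : quat R) : Prop := q0 p = 0.

Definition qmat := 'I_3 -> 'I_3 -> quat R.
Definition qmat_mul (A B : qmat) : qmat :=
  fun i j => \big[qadd/qzero]_(k < 3) qmul (A i k) (B k j).
Definition qmat_sub (A B : qmat) : qmat := fun i j => qadd (A i j) (qopp (B i j)).
Definition qbracket (A B : qmat) : qmat := qmat_sub (qmat_mul A B) (qmat_mul B A).
Definition qmat_zero : qmat := fun _ _ => qzero.
Definition qmat_lin_indep (A B : qmat) : Prop :=
  forall r s : R, (fun i j => qadd (qscale r (A i j)) (qscale s (B i j))) = qmat_zero ->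
    r = 0 /\ s = 0.

Definition matX (a b : quat R) : qmat := fun i j =>
  match nat_of_ord i, nat_of_ord j with
  | 0%N, 1%N => a
  | 1%N, 0%N => qopp (qconj a)
  | 1%N, 1%N => b
  | _, _ => qzero
  end.
Definition matY (c d : quat R) : qmat := fun i j =>
  match nat_of_ord i, nat_of_ord j with
  | 0%N, 2%N => c
  | 1%N, 2%N => d
  | 2%N, 0%N => qopp (qconj c)
  | 2%N, 1%N => qopp (qconj d)
  | _, _ => qzero
  end.
End Quat.

(* The (0,2) and (1,2) entries of [X,Y] are a d and b d - conj(a) c. Quaternions
   have no zero divisors because the squared norm is multiplicative, so a d = 0
   forces a = 0 or d = 0, and the second entry then forces d = 0, resp. a = 0,
   unless b = 0 or c = 0, i.e. unless X = 0 or Y = 0, which linear independence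
   rules out. *)
From mathcomp Require Import all_boot all_order all_algebra.
From mathcomp Require Import reals.
From mathcomp Require Import ring lra.
From Stdlib Require Import FunctionalExtensionality.
Import Order.TTheory GRing.Theory Num.Theory.
Set Implicit Arguments. Unset Strict Implicit. Unset Printing Implicit Defensive.
Local Open Scope ring_scope.

Section Quaternions.
Variable R : realType.
Implicit Types p q : quat R.

Lemma quat_eq p q :
  q0 p = q0 q -> q1 p = q1 q -> q2 p = q2 q -> q3 p = q3 q -> p = q.
Proof. by case: p; case: q => /= ? ? ? ? ? ? ? ? -> -> -> ->. Qed.

Definition qnorm2 p := q0 p ^+ 2 + q1 p ^+ 2 + q2 p ^+ 2 + q3 p ^+ 2.

Lemma qnorm2M p q : qnorm2 (qmul p q) = qnorm2 p * qnorm2 q.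
Proof. by rewrite /qnorm2 /=; ring. Qed.

Lemma qnorm2_eq0 p : qnorm2 p = 0 -> p = qzero R.
Proof.
rewrite /qnorm2 => h.
have := sqr_ge0 (q0 p); have := sqr_ge0 (q1 p).
have := sqr_ge0 (q2 p); have := sqr_ge0 (q3 p).
have sq0 (x : R) : x ^+ 2 = 0 -> x = 0 by move/eqP; rewrite sqrf_eq0 => /eqP.
by move=> *; apply: quat_eq; apply: sq0; lra.
Qed.

Lemma qmul_eq0 p q : qmul p q = qzero R -> p = qzero R \/ q = qzero R.
Proof.
move=> pq0; have : qnorm2 p * qnorm2 q = 0 by rewrite -qnorm2M pq0 /qnorm2 /=; ring.
by move/eqP; rewrite mulf_eq0 => /orP [] /eqP /qnorm2_eq0; [left | right].
Qed.

Lemma qopp_conj_eq0 p : qopp (qconj p) = qzero R -> p = qzero R.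
Proof.
move=> h; apply: quat_eq; move: (congr1 (@q0 R) h) (congr1 (@q1 R) h)
  (congr1 (@q2 R) h) (congr1 (@q3 R) h) => /= *; lra.
Qed.

End Quaternions.

Section Matrices.
Variable R : realType.
Implicit Types A B : qmat R.

Lemma qmatP A B : (forall i j, A i j = B i j) -> A = B.
Proof. by move=> AB; do 2 (apply: functional_extensionality => ?); apply: AB. Qed.

Lemma qmat_lin_indep_neq0l A B : qmat_lin_indep A B -> A <> qmat_zero R.
Proof.
move=> AB A0; have [|/eqP] := AB 1 0; last by rewrite oner_eq0.
by rewrite A0; apply: qmatP => i j; apply: quat_eq => /=; ring.
Qed.

Lemma qmat_lin_indep_neq0r A B : qmat_lin_indep A B -> B <> qmat_zero R.
Proof.
move=> AB B0; have [|_ /eqP] := AB 0 1; last by rewrite oner_eq0.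
by rewrite B0; apply: qmatP => i j; apply: quat_eq => /=; ring.
Qed.

Let i0 : 'I_3 := @Ordinal 3 0 isT.
Let i1 : 'I_3 := @Ordinal 3 1 isT.
Let i2 : 'I_3 := @Ordinal 3 2 isT.

Lemma matX_qzero : matX (qzero R) (qzero R) = qmat_zero R.
Proof.
by apply: qmatP => -[[|[|[|i]]] ?] [[|[|[|j]]] ?]; apply: quat_eq; rewrite /matX /=; ring.
Qed.

Lemma matY_qzero : matY (qzero R) (qzero R) = qmat_zero R.
Proof.
by apply: qmatP => -[[|[|[|i]]] ?] [[|[|[|j]]] ?]; apply: quat_eq; rewrite /matY /=; ring.
Qed.

Lemma qbracket_matXY02 (a b c d : quat R) : qbracket (matX a b) (matY c d) i0 i2 = qmul a d.
Proof.
apply: quat_eq;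
  by rewrite /qbracket /qmat_sub /qmat_mul !big_ord_recl big_ord0 /matX /matY /=; ring.
Qed.

Lemma qbracket_matXY12 (a b c d : quat R) :
  qbracket (matX a b) (matY c d) i1 i2 = qadd (qmul (qopp (qconj a)) c) (qmul b d).
Proof.
apply: quat_eq;
  by rewrite /qbracket /qmat_sub /qmat_mul !big_ord_recl big_ord0 /matX /matY /=; ring.
Qed.

Lemma qbracket_matXY_comm (b c : quat R) :
  qbracket (matX (qzero R) b) (matY c (qzero R)) = qmat_zero R.
Proof.
apply: qmatP => -[[|[|[|i]]] ?] [[|[|[|j]]] ?]; apply: quat_eq;
  by rewrite /qbracket /qmat_sub /qmat_mul !big_ord_recl big_ord0 /matX /matY /=; ring.
Qed.

End Matrices.

(* The hypothesis that b is purely imaginary only ensures X lies in sp(3); the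
   argument does not use it. *)
Theorem proposition3p1 (R : realType) (a b c d : quat R) :
  is_imag b ->
  qmat_lin_indep (matX a b) (matY c d) ->
  (qbracket (matX a b) (matY c d) = @qmat_zero R <-> (a = @qzero R /\ d = @qzero R)).
Proof.
move=> _ indep; split => [comm | [-> ->]]; last exact: qbracket_matXY_comm.
have X_neq0 := qmat_lin_indep_neq0l indep; have Y_neq0 := qmat_lin_indep_neq0r indep.
have ad0 : qmul a d = qzero R by rewrite -(qbracket_matXY02 a b c d) comm.
have e12 : qadd (qmul (qopp (qconj a)) c) (qmul b d) = qzero R.
  by rewrite -(qbracket_matXY12 a b c d) comm.
case: (qmul_eq0 ad0) => [a0 | d0]; subst.
- have bd0 : qmul b d = qzero R by rewrite -e12; apply: quat_eq => /=; ring.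
  case: (qmul_eq0 bd0) => [b0 | ->] //.
  by case: X_neq0; rewrite b0 matX_qzero.
- have ac0 : qmul (qopp (qconj a)) c = qzero R by rewrite -e12; apply: quat_eq => /=; ring.
  case: (qmul_eq0 ac0) => [/qopp_conj_eq0 -> | c0] //.
  by case: Y_neq0; rewrite c0 matY_qzero.
Qed.
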